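(* Let $G$ and $H$ be word-representable graphs, with $H$ rooted at some vertex. Then $l(G \circ H) \le |H|\,l(G) + |G|\,l(H) + (|H|-1)\kappa_G$, where $\kappa_G$ is the size of a maximum clique of $G$.
   Context: All graphs are simple and undirected; $|G|$ denotes the number of vertices of $G$. Letters $x,y$ alternate in a word $w$ if deleting all other letters from $w$ yields $xyxy\ldots$ or $yxyx\ldots$ (of either parity). A word $w$ over $V(G)$ represents $G$ if every vertex occurs in $w$ and for all distinct $x,y$, $xy\in E(G)$ iff $x,y$ alternate in $w$; $G$ is word-representable if such a word exists, and $l(G)$ is the minimum length of a word representing $G$. For a graph $G$ and a rooted graph $H$, the rooted product $G\circ H$ is obtained by taking $|V(G)|$ disjoint copies of $H$, one for each vertex $v$ of $G$, and identifying each vertex $v$ of $G$ with the root of its copy of $H$. *)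

From Stdlib Require Import ClassicalEpsilon.
From mathcomp Require Import all_boot.
Set Implicit Arguments. Unset Strict Implicit. Unset Printing Implicit Defensive.

Definition simple_graph (T : finType) (e : rel T) : Prop :=
  symmetric e /\ irreflexive e.

(* x and y alternate in w: deleting all other letters yields an alternating word,
   i.e. no two consecutive letters of the restriction are equal. *)
Definition alternate (T : eqType) (w : seq T) (x y : T) : bool :=
  sorted (fun a b => a != b) (filter (fun z => (z == x) || (z == y)) w).

Definition represents (T : finType) (e : rel T) (w : seq T) : bool :=
  [forall x, x \in w] &&
  [forall x, forall y, (x != y) ==> (e x y == alternate w x y)].

Definition word_representable (T : finType) (e : rel T) : Prop :=
  exists w : seq T, represents e w.

Definition repr_of_length (T : finType) (e : rel T) (n : nat) : bool :=
  [exists t : n.-tuple T, represents e t].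

(* l(G): the minimum length of a word representing G (0 if G is not
   word-representable; only used for word-representable graphs). *)
Definition wr_length (T : finType) (e : rel T) : nat :=
  match excluded_middle_informative (exists n, repr_of_length e n) with
  | left H => ex_minn H
  | right _ => 0
  end.

Definition is_clique (T : finType) (e : rel T) (A : {set T}) : bool :=
  [forall x in A, forall y in A, (x != y) ==> e x y].

Definition clique_number (T : finType) (e : rel T) : nat :=
  \max_(A : {set T} | is_clique e A) #|A|.

(* Rooted product G o H: vertex (v, u) is the copy of u in the copy of H
   attached at v; vertex v of G is identified with (v, r). *)
Definition rooted_product (T U : finType) (eG : rel T) (eH : rel U) (r : U)
  : rel (T * U) :=
  fun p q =>
    ((p.1 == q.1) && eH p.2 q.2) ||
    [&& p.2 == r, q.2 == r & eG p.1 q.1].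

From Stdlib Require Import ClassicalEpsilon.
From mathcomp Require Import all_boot.
Set Implicit Arguments. Unset Strict Implicit. Unset Printing Implicit Defensive.

(* Let a represent G and b represent H, and let c be the number of occurrences
   of the root r in b.  Appending copies of undup w to a representing word w
   preserves the represented graph, so a (undup a)^c represents G and contains
   each vertex v exactly d_v + c times, d_v being its multiplicity in a; and
   b (undup b)^d_v, followed by the part of undup b before r when d_v = 1,
   represents H and contains r exactly c + d_v times.  Cut the latter word into
   c + d_v blocks with one r each and substitute them, tagged with v, for the
   successive occurrences of v in a (undup a)^c.  Restricted to one copy of H
   or to the roots, the result gives back the two words.  A letter (v, u) with
   u <> r does not alternate with any letter of another copy, because one block
   of copy v contains u twice.  The length is |H||a| + |G||b| plus at most
   |H| - 1 for each v with d_v = 1, and such letters of a form a clique. *)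

Lemma filter_pred1_nseq (T : eqType) (s : seq T) x :
  filter (pred1 x) s = nseq (count_mem x s) x.
Proof.
rewrite -size_filter; apply/all_pred1P.
by rewrite all_filter; apply/allP => z /=; rewrite implybb.
Qed.

Lemma undup_cat_flatten_nseq_undup (T : eqType) (w : seq T) k :
  undup (w ++ flatten (nseq k (undup w))) = undup w.
Proof.
case: k => [|k]; first by rewrite cats0.
rewrite undup_cat undup_flatten_nseq // (undup_id (undup_uniq w)).
rewrite (@eq_in_filter _ _ pred0) ?filter_pred0 // => x.
by rewrite mem_undup /= mem_cat mem_undup => ->.
Qed.

Lemma flatten_nseq_rot (A : Type) (p q : seq A) n :
  flatten (nseq n.+1 (p ++ q)) = p ++ flatten (nseq n (q ++ p)) ++ q.
Proof.
elim: n => [|n IH]; first by rewrite /= !cats0.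
have flatten_nseqS k s : flatten (nseq k.+1 s) = s ++ flatten (nseq k s) by [].
by rewrite flatten_nseqS IH flatten_nseqS -!catA.
Qed.

Lemma sum_count_eq_size (A : Type) (I : finType) (f : A -> I) (s : seq A) :
  \sum_(i : I) count (fun z => f z == i) s = size s.
Proof.
elim: s => [|z s IH] /=; first by rewrite big1.
rewrite big_split /= IH (bigD1 (f z)) //= eqxx big1 // => i /negbTE.
by rewrite eq_sym => ->.
Qed.

Section Alternate.
Variable T : eqType.
Implicit Types (w s : seq T) (x y : T).

Lemma alternateC w x y : alternate w x y = alternate w y x.
Proof. by rewrite /alternate; congr sorted; apply: eq_filter => z; rewrite orbC. Qed.

Lemma alternate_catl w s x y : alternate (w ++ s) x y -> alternate w x y.
Proof.
rewrite /alternate filter_cat; case: (filter _ w) => //= z f.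
by rewrite cat_path => /andP[].
Qed.

Lemma alternate_filter (p : pred T) w x y :
  p x -> p y -> alternate (filter p w) x y = alternate w x y.
Proof.
move=> px py; rewrite /alternate -filter_predI; congr sorted; apply: eq_filter => z /=.
case: (z =P x) => [->|_]; first by rewrite px orTb.
by case: (z =P y) => [->|_]; rewrite ?py ?andbF.
Qed.

Lemma alternate_map (S : eqType) (f : T -> S) w x y :
  injective f -> alternate (map f w) (f x) (f y) = alternate w x y.
Proof.
move=> f_inj; rewrite /alternate filter_map sorted_map.
rewrite (eq_filter (a2 := fun z => (z == x) || (z == y))) => [|z].
  by case: (filter _ w) => //= z f'; apply: eq_path => u v /=; rewrite inj_eq.
by rewrite /= !inj_eq.
Qed.

Lemma alternate_infix_count s w x y :
  infix s w -> 1 < count_mem x s -> y \notin s -> ~~ alternate w x y.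
Proof.
case/infixP=> [w1 [w2 ->]] cx yNs; rewrite /alternate !filter_cat.
have -> : filter (fun z => (z == x) || (z == y)) s = nseq (count_mem x s) x.
  rewrite -filter_pred1_nseq; apply: eq_in_filter => z zs.
  have zy : (z == y) = false by apply: contraNF yNs => /eqP <-.
  by rewrite zy orbF.
case: (count_mem x s) cx => [|[|n]] //= _.
case: (filter _ w1) => [|z f] /=; first by rewrite eqxx.
by rewrite cat_path /= eqxx !andbF.
Qed.

(* undup keeps the last occurrence of each letter, so the restriction of
   undup w to {x, y} consists of the last two letters of the restriction of w. *)
Lemma alternate_cat_take_undup w j x y : x != y -> x \in w -> y \in w ->
  alternate w x y -> alternate (w ++ take j (undup w)) x y.
Proof.
move=> nxy xw yw; rewrite /alternate filter_cat.
set P := fun z => (z == x) || (z == y).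
have [k ->] : exists k, filter P (take j (undup w)) = take k (filter P (undup w)).
  exists (size (filter P (take j (undup w)))).
  by rewrite -{3}(cat_take_drop j (undup w)) filter_cat take_size_cat.
rewrite filter_undup; set F := filter P w.
have xF : x \in F by rewrite mem_filter /P eqxx xw.
have yF : y \in F by rewrite mem_filter /P eqxx orbT yw.
have PF : {subset F <= [:: x; y]} by move=> z; rewrite mem_filter !inE => /andP[].
case/lastP E: F xF yF PF => [|F1 l] //; case/lastP: F1 E => [|F' o] E.
  by rewrite !inE => /eqP xl /eqP yl; rewrite xl yl eqxx in nxy.
rewrite -cats1 -cats1 -catA /= => _ _ PF altF.
have /= /andP[nol _] := suffix_sorted (suffix_suffix F' [:: o; l]) altF.
have [_ ol_xy] : (size [:: o; l] = size [:: x; y]) * ([:: o; l] =i [:: x; y]).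
  apply: uniq_min_size => [|z zol|] //=; first by rewrite inE nol.
  by apply: PF; rewrite mem_cat zol orbT.
have -> : undup (F' ++ [:: o; l]) = [:: o; l].
  rewrite undup_cat (@undup_id _ [:: o; l]) /= ?inE ?nol //.
  rewrite (@eq_in_filter _ _ pred0) ?filter_pred0 // => z.
  by rewrite mem_undup /= ol_xy => zF; rewrite PF // mem_cat zF.
move: altF; rewrite -catA /= !sorted_cat_cons /= nol => /andP[-> _].
by case: k => [|[|k]] //=; rewrite eq_sym nol.
Qed.
End Alternate.

Section Represents.
Variables (T : finType) (e : rel T).
Implicit Types (w s : seq T) (x y : T).

Lemma represents_mem w x : represents e w -> x \in w.
Proof. by case/andP=> /forallP. Qed.

Lemma represents_edge w x y : represents e w -> x != y -> e x y = alternate w x y.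
Proof. by case/andP=> _ /forallP/(_ x)/forallP/(_ y)/implyP H /H/eqP. Qed.

Lemma represents_catr w s : represents e w ->
  (forall x y, x != y -> alternate w x y -> alternate (w ++ s) x y) ->
  represents e (w ++ s).
Proof.
move=> Rw ext; apply/andP; split.
  by apply/forallP => x; rewrite mem_cat represents_mem.
apply/forallP => x; apply/forallP => y; apply/implyP => nxy.
rewrite (represents_edge Rw nxy); apply/eqP; apply/idP/idP; first exact: ext.
exact: alternate_catl.
Qed.

Lemma represents_cat_take_undup w j :
  represents e w -> represents e (w ++ take j (undup w)).
Proof.
move=> Rw; apply: represents_catr => // x y nxy.
by apply: alternate_cat_take_undup; rewrite ?represents_mem.
Qed.

Lemma represents_cat_flatten_nseq_undup w k j : represents e w ->
  represents e (w ++ flatten (nseq k (undup w)) ++ take j (undup w)).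
Proof.
move=> Rw; rewrite catA -{2}(undup_cat_flatten_nseq_undup w k).
apply: represents_cat_take_undup; elim: k => [|k IHk]; first by rewrite cats0.
rewrite -addn1 nseqD flatten_cat /= cats0 catA.
have := represents_cat_take_undup (size (undup w)) IHk.
by rewrite undup_cat_flatten_nseq_undup take_size.
Qed.

Lemma represents_clique_once w :
  represents e w -> is_clique e [set x | count_mem x w == 1].
Proof.
move=> Rw; apply/forallP => x; apply/implyP; rewrite inE => /eqP cx.
apply/forallP => y; apply/implyP; rewrite inE => /eqP cy; apply/implyP => nxy.
rewrite (represents_edge Rw nxy) /alternate; set F := filter _ w.
have sizeF : size F = 2.
  rewrite size_filter; have := count_predUI (pred1 x) (pred1 y) w.
  rewrite cx cy (@eq_count _ (predI _ _) pred0) ?count_pred0 ?addn0 => [E|z].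
    exact: E.
  by apply/negbTE/andP => -[/eqP-> /eqP xy]; rewrite xy eqxx in nxy.
have xF : x \in F by rewrite mem_filter eqxx represents_mem.
have yF : y \in F by rewrite mem_filter eqxx orbT represents_mem.
case: F sizeF xF yF => [|z1 [|z2 []]] //= _; rewrite !inE andbT.
by case/orP=> /eqP xz /orP[]/eqP yz; move: nxy; rewrite xz yz ?eqxx // eq_sym.
Qed.

Lemma represents_count_gt0 w x : represents e w -> 0 < count_mem x w.
Proof. by rewrite -has_count has_pred1; apply: represents_mem. Qed.

Lemma size_undup_represents w : represents e w -> size (undup w) = #|T|.
Proof.
move=> Rw; rewrite cardE; apply/perm_size/uniq_perm; rewrite ?undup_uniq ?enum_uniq //.
by move=> x; rewrite mem_undup mem_enum represents_mem.
Qed.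

Lemma clique_number_ge A : is_clique e A -> #|A| <= clique_number e.
Proof. exact: (leq_bigmax_cond (F := fun A : {set T} => #|A|)). Qed.

Lemma wr_length_le w : represents e w -> wr_length e <= size w.
Proof.
move=> Rw; rewrite /wr_length; case: excluded_middle_informative => [H|[]].
  by case: (ex_minnP H) => n _ -> //; apply/existsP; exists (in_tuple w).
by exists (size w); apply/existsP; exists (in_tuple w).
Qed.

Lemma wr_length_attained :
  word_representable e -> exists2 w, represents e w & size w = wr_length e.
Proof.
case=> w0 Rw0; rewrite /wr_length; case: excluded_middle_informative => [H|[]].
  by case: (ex_minnP H) => n /existsP[t Rt] _; exists t; rewrite ?size_tuple.
by exists (size w0); apply/existsP; exists (in_tuple w0).
Qed.

End Represents.

Section Interleave.
Variables (T U : eqType) (blk : T -> nat -> seq U).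

(* The occurrences of x in R are replaced, in order, by the tagged blocks
   blk x (off x), blk x (off x + 1), ... *)
Fixpoint interleave (R : seq T) (off : T -> nat) : seq (T * U) :=
  if R is x :: R' then
    map (pair x) (blk x (off x)) ++ interleave R' (fun y => off y + (y == x))
  else [::].

Lemma filter_fst_interleave R off v :
  filter (fun z => z.1 == v) (interleave R off) =
  map (pair v) (flatten [seq blk v k | k <- iota (off v) (count_mem v R)]).
Proof.
elim: R off => [|x R IH] off //=; rewrite filter_cat IH filter_map.
have [<-|xv] := eqVneq x v.
  rewrite add1n addn1 /= map_cat; congr (_ ++ _).
  by rewrite (@eq_filter _ _ predT) ?filter_predT // => u /=; rewrite eqxx.
rewrite (@eq_filter _ _ pred0) ?filter_pred0 => [|u /=]; last exact/negbTE.
by rewrite addn0.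
Qed.

Lemma filter_snd_interleave R off r :
  (forall x k, count_mem r (blk x k) = 1) ->
  filter (fun z => z.2 == r) (interleave R off) = map (pair^~ r) R.
Proof.
move=> blk_r; elim: R off => [|x R IH] off //=.
by rewrite filter_cat IH filter_map (@eq_filter _ _ (pred1 r)) // filter_pred1_nseq blk_r.
Qed.

Lemma interleave_infix R off v k : off v <= k < off v + count_mem v R ->
  infix (map (pair v) (blk v k)) (interleave R off).
Proof.
elim: R off => [|x R IH] off /=.
  by rewrite addn0 => /andP[/leq_ltn_trans/[apply]]; rewrite ltnn.
have [->|xv] := eqVneq x v; last first.
  by move=> hk; apply/infix_catl/IH; rewrite eq_sym (negbTE xv) addn0.
rewrite add1n addnS => /andP[]; rewrite leq_eqVlt => /orP[/eqP<- _|lo hi].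
  by apply: infix_catr; apply: infix_refl.
by apply/infix_catl/IH; rewrite eqxx addn1 lo.
Qed.

End Interleave.

Lemma root_split (U : eqType) (r : U) (s : seq U) :
  exists segs t, [/\ s = flatten [seq rcons x r | x <- segs] ++ t,
                     all (fun x => r \notin x) segs & r \notin t].
Proof.
elim/last_ind: s => [|s x [segs [t [-> segs_r t_r]]]]; first by exists [::], [::].
have [->|xr] := eqVneq x r.
  exists (rcons segs t), [::].
  by rewrite map_rcons flatten_rcons cats0 rcons_cat all_rcons t_r segs_r.
by exists segs, (rcons t x); rewrite rcons_cat mem_rcons inE eq_sym (negbTE xr).
Qed.

Lemma count_flatten_rcons (U : eqType) (r : U) (ss : seq (seq U)) :
  all (fun x => r \notin x) ss ->
  count_mem r (flatten [seq rcons x r | x <- ss]) = size ss.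
Proof.
elim: ss => //= x ss IH /andP[xr /IH count_ss].
by rewrite count_cat count_ss -cats1 count_cat (count_memPn xr) /= eqxx.
Qed.

Section CopyWord.
Variables (U : finType) (eH : rel U) (r : U) (b : seq U).
Variables (segs : seq (seq U)) (t : seq U).
Hypotheses (Hb : represents eH b)
  (b_split : b = flatten [seq rcons x r | x <- segs] ++ t)
  (segs_r : all (fun x => r \notin x) segs) (t_r : r \notin t).

Lemma size_segs : size segs = count_mem r b.
Proof.
by rewrite b_split count_cat (count_memPn t_r) addn0 count_flatten_rcons.
Qed.

Definition pre_root := take (index r (undup b)) (undup b).
Definition post_root := undup t.

Lemma undup_split : undup b = pre_root ++ r :: post_root.
Proof.
have : segs != [::].
  by rewrite -size_eq0 size_segs -lt0n (represents_count_gt0 _ Hb).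
case/lastP E: segs => [|ss x] // _.
rewrite /pre_root /post_root.
have -> : b = (flatten [seq rcons y r | y <- ss] ++ x) ++ r :: t.
  by rewrite b_split E map_rcons flatten_rcons -cats1 -!catA.
rewrite undup_cat /= (negbTE t_r) take_pivot //.
by rewrite mem_filter inE eqxx.
Qed.

Lemma root_notin_pre_post : r \notin pre_root /\ r \notin post_root.
Proof.
have := undup_uniq b; rewrite undup_split cat_uniq /= => /and3P[_ /norP[rNpre _]].
by case/andP.
Qed.

(* Every letter other than r occurs twice in fat_block, as post_root only
   contains letters of t. *)
Definition fat_block := t ++ pre_root ++ r :: post_root ++ pre_root.

(* For d = 1 the last pre_root completes fat_block; for d > 1 fat_block takes
   it from the second copy of undup b. *)
Definition copy_word d :=
  b ++ flatten (nseq d (undup b)) ++ (if d == 1 then pre_root else [::]).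

Definition copy_blocks d :=
  [seq rcons x r | x <- segs] ++ fat_block ::
  (if d is d'.+2 then rcons (nseq d' (r :: post_root ++ pre_root)) (r :: post_root)
   else [::]).

Lemma flatten_copy_blocks d : 0 < d -> flatten (copy_blocks d) = copy_word d.
Proof.
move=> d_gt0; rewrite /copy_blocks /copy_word {1}b_split flatten_cat -!catA.
congr (_ ++ _); case: d d_gt0 => [|[|d]] // _.
  by rewrite /= undup_split /fat_block !cats0 -!catA.
rewrite cats0 undup_split flatten_nseq_rot /= flatten_rcons /fat_block.
by rewrite -!catA cat_cons -!catA.
Qed.

Lemma size_copy_blocks d : 0 < d -> size (copy_blocks d) = count_mem r b + d.
Proof.
rewrite /copy_blocks size_cat size_map size_segs.
by case: d => [|[|d]] //= _; rewrite size_rcons size_nseq.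
Qed.

Lemma count_copy_blocks d B : B \in copy_blocks d -> count_mem r B = 1.
Proof.
have [/count_memPn pre0 /count_memPn post0] := root_notin_pre_post.
rewrite mem_cat => /orP[/mapP[x /(allP segs_r) /count_memPn xr ->]|].
  by rewrite -cats1 count_cat xr /= eqxx.
rewrite inE => /orP[/eqP->|].
  by rewrite /fat_block !count_cat /= count_cat eqxx (count_memPn t_r) pre0 post0.
case: d => [|[|d]] //; rewrite mem_rcons inE => /orP[/eqP->|].
  by rewrite /= eqxx post0.
by case/nseqP => -> _; rewrite /= eqxx count_cat pre0 post0.
Qed.

Lemma nth_copy_blocks d B0 : nth B0 (copy_blocks d) (count_mem r b) = fat_block.
Proof. by rewrite nth_cat size_map size_segs ltnn subnn. Qed.

Lemma count_fat_block u : u != r -> 1 < count_mem u fat_block.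
Proof.
move=> ur; have count_gt0 (s : seq U) : u \in s -> 0 < count_mem u s.
  by rewrite -has_pred1 has_count.
have : u \in undup b by rewrite mem_undup (represents_mem _ Hb).
rewrite undup_split mem_cat inE (negbTE ur) /= /fat_block !count_cat /= count_cat.
rewrite eq_sym (negbTE ur) add0n => /orP[/count_gt0 pre_gt0|u_post].
  by apply/ltn_addl; rewrite addnCA; apply/ltn_addl/(leq_add pre_gt0 pre_gt0).
have t_gt0 : 0 < count_mem u t by rewrite count_gt0 // -mem_undup.
rewrite addnCA; apply/ltn_addl; rewrite addnA.
exact/ltn_addr/(leq_add t_gt0 (count_gt0 _ u_post)).
Qed.

Lemma represents_copy_word d : represents eH (copy_word d).
Proof.
rewrite /copy_word; have -> : (if d == 1 then pre_root else [::]) =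
          take (if d == 1 then index r (undup b) else 0) (undup b).
  by case: (d == 1); rewrite ?take0.
exact: represents_cat_flatten_nseq_undup.
Qed.

Lemma size_copy_word d :
  size (copy_word d) = size b + d * #|U| + (d == 1) * size pre_root.
Proof.
rewrite /copy_word !size_cat size_flatten /shape map_nseq sumn_nseq.
rewrite (size_undup_represents Hb) addnA (mulnC d).
by case: (d == 1); rewrite ?mul1n ?mul0n.
Qed.

Lemma size_pre_root : size pre_root <= #|U| - 1.
Proof.
have r_lt : index r (undup b) < #|U|.
  by rewrite -(size_undup_represents Hb) index_mem mem_undup (represents_mem _ Hb).
rewrite /pre_root size_take (size_undup_represents Hb) r_lt -ltnS subn1 prednK //.
exact: leq_ltn_trans r_lt.
Qed.

Section ProductWord.
Variables (T : finType) (eG : rel T) (a : seq T).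
Hypothesis Ha : represents eG a.

Definition root_schedule := a ++ flatten (nseq (count_mem r b) (undup a)).

Definition product_word :=
  interleave (fun v => nth [:: r] (copy_blocks (count_mem v a))) root_schedule (fun=> 0).

Lemma represents_root_schedule : represents eG root_schedule.
Proof.
by have := represents_cat_flatten_nseq_undup (count_mem r b) 0 Ha; rewrite take0 cats0.
Qed.

Lemma count_root_schedule v :
  count_mem v root_schedule = count_mem v a + count_mem r b.
Proof.
rewrite count_cat count_flatten map_nseq sumn_nseq.
by rewrite (count_uniq_mem v (undup_uniq a)) mem_undup (represents_mem _ Ha) mul1n.
Qed.

Lemma filter_fst_product_word v :
  filter (fun z => z.1 == v) product_word = map (pair v) (copy_word (count_mem v a)).
Proof.
have v_gt0 := represents_count_gt0 v Ha.
rewrite filter_fst_interleave count_root_schedule addnC.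
rewrite -(size_copy_blocks v_gt0) -(flatten_copy_blocks v_gt0).
by congr (map _ (flatten _)); apply: mkseq_nth.
Qed.

Lemma filter_snd_product_word :
  filter (fun z => z.2 == r) product_word = map (pair^~ r) root_schedule.
Proof.
apply: filter_snd_interleave => v k.
have [k_lt|k_ge] := ltnP k (size (copy_blocks (count_mem v a))).
  by apply: count_copy_blocks; apply: mem_nth.
by rewrite nth_default //= eqxx.
Qed.

Lemma infix_fat_block v : infix (map (pair v) fat_block) product_word.
Proof.
rewrite -(nth_copy_blocks (count_mem v a) [:: r]); apply: interleave_infix.
rewrite count_root_schedule /= -{1}(add0n (count_mem r b)) ltn_add2r.
exact: represents_count_gt0 Ha.
Qed.

Lemma product_word_not_alternate v u q :
  u != r -> q.1 != v -> ~~ alternate product_word (v, u) q.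
Proof.
move=> ur qv; apply: (alternate_infix_count (infix_fat_block v)).
  rewrite count_map (@eq_count _ _ (pred1 u)) ?count_fat_block // => u' /=.
  by rewrite xpair_eqE eqxx.
by apply: contra qv => /mapP[u' _ ->].
Qed.

Lemma represents_product_word :
  irreflexive eG -> represents (rooted_product eG eH r) product_word.
Proof.
move=> irrG; apply/andP; split.
  apply/forallP => -[v u].
  have : (v, u) \in filter (fun z => z.1 == v) product_word.
    rewrite filter_fst_product_word mem_map => [|? ? []] //.
    by rewrite mem_cat (represents_mem _ Hb).
  by rewrite mem_filter => /andP[].
apply/forallP => -[v u]; apply/forallP => -[v' u']; apply/implyP.
rewrite /rooted_product /=; have [<- neq|vv' _] := eqVneq v v'.
  have uu' : u != u' by apply: contraNneq neq => ->.
  rewrite irrG !andbF orbF /= -(alternate_filter _ (p := fun z => z.1 == v)) ?eqxx //.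
  rewrite filter_fst_product_word alternate_map => [|? ? []] //.
  exact/eqP/represents_edge/uu'/represents_copy_word.
have [->|ur] := eqVneq u r; last first.
  by rewrite /= (negbTE (product_word_not_alternate ur _)) // eq_sym.
have [->|u'r] := eqVneq u' r; last first.
  by rewrite andbF /= alternateC (negbTE (product_word_not_alternate u'r _)).
rewrite /= -(alternate_filter _ (p := fun z => z.2 == r)) ?eqxx //.
rewrite filter_snd_product_word alternate_map => [|? ? []] //.
exact/eqP/represents_edge/vv'/represents_root_schedule.
Qed.

Lemma size_product_word : size product_word =
  #|U| * size a + #|T| * size b + #|[set v | count_mem v a == 1]| * size pre_root.
Proof.
rewrite -(sum_count_eq_size fst).
under eq_bigr => v _ do
  rewrite -size_filter filter_fst_product_word size_map size_copy_word.
rewrite !big_split /= -!big_distrl /= (sum_count_eq_size id) mulnC [_ + #|U| * _]addnC.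
rewrite sum_nat_const; congr (_ + _ + _ * _).
by rewrite -sum1_card [RHS]big_mkcond; apply: eq_bigr => v _; rewrite inE; case: (_ == 1).
Qed.

End ProductWord.
End CopyWord.

Theorem mainTheorem11 (T U : finType) (eG : rel T) (eH : rel U) (r : U) :
  simple_graph eG -> simple_graph eH ->
  word_representable eG -> word_representable eH ->
  word_representable (rooted_product eG eH r) /\
  wr_length (rooted_product eG eH r) <=
    #|U| * wr_length eG + #|T| * wr_length eH + (#|U| - 1) * clique_number eG.
Proof.
move=> [_ irrG] _ /wr_length_attained[a Ha <-] /wr_length_attained[b Hb <-].
have [segs [t [b_split segs_r t_r]]] := root_split r b.
have RW := represents_product_word Hb b_split segs_r t_r Ha irrG.
split; first by exists (product_word r b segs t a).
apply: leq_trans (wr_length_le RW) _.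
rewrite (size_product_word Hb b_split segs_r t_r Ha) leq_add2l mulnC.
apply: leq_mul; first exact: size_pre_root Hb.
exact/clique_number_ge/represents_clique_once/Ha.
Qed.
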